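(* Let $N>0$, $m>0$, $F>0$, $\alpha>0$, $w>0$ be fixed with $Nm>\alpha$, and for $g\geq 0$, $\tau\in(0,1)$, $L_g\geq 0$ define \[ L=\frac{N\left[(1-\tau)(mL_g+\alpha F)+(mg+F)mN\right]}{\alpha+(Nm-\alpha)\tau},\qquad q=\frac{(1-\tau)(L+L_g-\alpha g)}{\left(Nm+\alpha(1-\tau)\right)(L+L_g)}, \] \[ p=\frac{L+L_g}{L+L_g-\alpha g}\left(mw+\frac{\alpha(1-\tau)w}{N}\right),\qquad \Pi=\left((L+L_g)q+g\right)(p-mw)-Fw, \] regarded as functions of $(g,\tau,L_g)$. If $\alpha>1-\tau$, then \[ \frac{\partial \Pi}{\partial g}>\frac{\partial \Pi}{\partial L_g}. \]
   Context: These are the symmetric-equilibrium private employment $L$, per-capita consumption $q$ of each variety, price $p$, and profit $\Pi$ of each firm in a monopolistic-competition general equilibrium model with a measure $N$ of firms, marginal and fixed labor inputs $m$ and $F$, CARA utility parameter $\alpha$, nominal wage $w$, income tax rate $\tau$, government purchase $g$ of each variety, and government employment $L_g$. Partial derivatives are taken in $(g,\tau,L_g)$ with other parameters fixed. *)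

From Stdlib Require Import Reals.
From Coquelicot Require Import Coquelicot.
Open Scope R_scope.

Definition Lpriv (N m F alpha : R) (g tau Lg : R) : R :=
  N * ((1 - tau) * (m * Lg + alpha * F) + (m * g + F) * m * N)
  / (alpha + (N * m - alpha) * tau).

Definition qcons (N m F alpha : R) (g tau Lg : R) : R :=
  let L := Lpriv N m F alpha g tau Lg in
  (1 - tau) * (L + Lg - alpha * g)
  / ((N * m + alpha * (1 - tau)) * (L + Lg)).

Definition price (N m F alpha w : R) (g tau Lg : R) : R :=
  let L := Lpriv N m F alpha g tau Lg in
  (L + Lg) / (L + Lg - alpha * g) * (m * w + alpha * (1 - tau) * w / N).

Definition profit (N m F alpha w : R) (g tau Lg : R) : R :=
  let L := Lpriv N m F alpha g tau Lg in
  ((L + Lg) * qcons N m F alpha g tau Lg + g)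
    * (price N m F alpha w g tau Lg - m * w) - F * w.

(* With total employment S = L + Lg, X = (1 - tau) S + N m g and Y = S - alpha g,
   the profit collapses to Pi = w alpha / (N K) * X^2 / Y - F w where
   K = N m + alpha (1 - tau), and S is affine in (g, Lg).  Both partial
   derivatives are therefore quotient-rule expressions in the same X and Y, and
   their difference is a positive multiple of 2 Y dX - X dY, where dX, dY are
   the differences of the slopes of X and Y in the two directions.  An explicit
   identity writes 2 Y dX - X dY as a combination of S - (dS/dg) g > 0 and g >= 0
   with coefficients that are positive as soon as 1 - tau < N m, which follows
   from 1 - tau < alpha < N m. *)

From Stdlib Require Import Reals Lra.
From Coquelicot Require Import Coquelicot.
Open Scope R_scope.

Lemma locally_pos_of_continuous (f : R -> R) (x : R) :
  continuous f x -> 0 < f x -> locally x (fun t => 0 < f t).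
Proof.
  intros Hf Hfx.
  apply Hf; exists (mkposreal _ Hfx); intros y Hy.
  change (Rabs (y - f x) < f x) in Hy.
  apply Rabs_def2 in Hy; lra.
Qed.

Section Equilibrium.

Variables N m F alpha w tau : R.

Local Notation D := (alpha + (N * m - alpha) * tau).
Local Notation K := (N * m + alpha * (1 - tau)).
Local Notation dSg := ((N * m) ^ 2 / D).
Local Notation dSL := (1 + N * m * (1 - tau) / D).
Local Notation S0 := (N * F * (alpha * (1 - tau) + N * m) / D).
Local Notation S g Lg := (Lpriv N m F alpha g tau Lg + Lg).
Local Notation X s g := ((1 - tau) * s + N * m * g).
Local Notation Y s g := (s - alpha * g).

Lemma employment_affine g Lg : D <> 0 -> S g Lg = dSg * g + dSL * Lg + S0.
Proof. intros HD; unfold Lpriv; field; exact HD. Qed.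

Definition reduced_profit (s g : R) : R :=
  w * alpha / (N * K) * X s g ^ 2 / Y s g - F * w.

(* (L + Lg) q + g = X / K and p - m w = w alpha X / (N Y). *)
Lemma profit_reduced g Lg :
  N <> 0 -> K <> 0 -> S g Lg <> 0 -> Y (S g Lg) g <> 0 ->
  profit N m F alpha w g tau Lg = reduced_profit (S g Lg) g.
Proof.
  intros HN HK HS HY; unfold profit, qcons, price, reduced_profit; cbv zeta.
  set (L := Lpriv N m F alpha g tau Lg) in *.
  field; repeat split; assumption.
Qed.

Lemma is_derive_reduced_profit_g (s : R -> R) g ds :
  N <> 0 -> K <> 0 -> is_derive s g ds -> Y (s g) g <> 0 ->
  is_derive (fun t => reduced_profit (s t) t) g
    (w * alpha / (N * K)
     * (2 * X (s g) g * ((1 - tau) * ds + N * m) * Y (s g) g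
        - X (s g) g ^ 2 * (ds - alpha)) / Y (s g) g ^ 2).
Proof.
  intros HN HK Hs HY; unfold reduced_profit; auto_derive.
  - repeat split; try (exists ds; exact Hs); assumption.
  - replace (Derive (fun x : R => s x) g) with ds
      by (symmetry; apply is_derive_unique; exact Hs).
    field; repeat split; assumption.
Qed.

Lemma is_derive_reduced_profit_Lg (s : R -> R) g Lg ds :
  N <> 0 -> K <> 0 -> is_derive s Lg ds -> Y (s Lg) g <> 0 ->
  is_derive (fun t => reduced_profit (s t) g) Lg
    (w * alpha / (N * K)
     * (2 * X (s Lg) g * ((1 - tau) * ds) * Y (s Lg) g
        - X (s Lg) g ^ 2 * ds) / Y (s Lg) g ^ 2).
Proof.
  intros HN HK Hs HY; unfold reduced_profit; auto_derive.
  - repeat split; try (exists ds; exact Hs); assumption.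
  - replace (Derive (fun x : R => s x) Lg) with ds
      by (symmetry; apply is_derive_unique; exact Hs).
    field; repeat split; assumption.
Qed.

Lemma is_derive_employment_g g Lg : D <> 0 -> is_derive (fun t => S t Lg) g dSg.
Proof. intros HD; unfold Lpriv; auto_derive; [trivial | field; exact HD]. Qed.

Lemma is_derive_employment_Lg g Lg : D <> 0 -> is_derive (fun t => S g t) Lg dSL.
Proof. intros HD; unfold Lpriv; auto_derive; [trivial | field; exact HD]. Qed.

Lemma is_derive_profit_g g Lg :
  N <> 0 -> K <> 0 -> D <> 0 -> 0 < S g Lg -> 0 < Y (S g Lg) g ->
  is_derive (fun x => profit N m F alpha w x tau Lg) g
    (w * alpha / (N * K)
     * (2 * X (S g Lg) g * ((1 - tau) * dSg + N * m) * Y (S g Lg) g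
        - X (S g Lg) g ^ 2 * (dSg - alpha)) / Y (S g Lg) g ^ 2).
Proof.
  intros HN HK HD HS HY.
  apply is_derive_ext_loc with (fun t => reduced_profit (S t Lg) t).
  - assert (Hloc : locally g (fun t => 0 < S t Lg /\ 0 < Y (S t Lg) t)).
    { apply filter_and;
        apply locally_pos_of_continuous; [| assumption | | assumption];
        apply (ex_derive_continuous (V := R_NormedModule));
        unfold Lpriv; auto_derive; auto. }
    revert Hloc; apply filter_imp; intros t [Hs Hy].
    symmetry; apply profit_reduced; lra.
  - apply (is_derive_reduced_profit_g (fun t => S t Lg));
      [| | apply is_derive_employment_g |]; lra.
Qed.

Lemma is_derive_profit_Lg g Lg :
  N <> 0 -> K <> 0 -> D <> 0 -> 0 < S g Lg -> 0 < Y (S g Lg) g ->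
  is_derive (fun x => profit N m F alpha w g tau x) Lg
    (w * alpha / (N * K)
     * (2 * X (S g Lg) g * ((1 - tau) * dSL) * Y (S g Lg) g
        - X (S g Lg) g ^ 2 * dSL) / Y (S g Lg) g ^ 2).
Proof.
  intros HN HK HD HS HY.
  apply is_derive_ext_loc with (fun t => reduced_profit (S g t) g).
  - assert (Hloc : locally Lg (fun t => 0 < S g t /\ 0 < Y (S g t) g)).
    { apply filter_and;
        apply locally_pos_of_continuous; [| assumption | | assumption];
        apply (ex_derive_continuous (V := R_NormedModule));
        unfold Lpriv; auto_derive; auto. }
    revert Hloc; apply filter_imp; intros t [Hs Hy].
    symmetry; apply profit_reduced; lra.
  - apply (is_derive_reduced_profit_Lg (fun t => S g t));
      [| | apply is_derive_employment_Lg |]; lra.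
Qed.

Lemma derivative_gap_identity s g : D <> 0 ->
  2 * Y s g * ((1 - tau) * (dSg - dSL) + N * m) - X s g * (dSg - dSL - alpha)
  = K * ((s - dSg * g) * (D + N * m - (1 - tau)) / D
         + g * K * ((N * m - alpha) * (N * m - 2 * (1 - tau)) + N * m) / D ^ 2).
Proof. intros HD; field; exact HD. Qed.

Lemma profit_derivative_g_gt_Lg g Lg :
  0 < N -> 0 < F -> 0 < alpha -> 0 < w -> alpha < N * m ->
  0 <= g -> 0 < tau < 1 -> 0 <= Lg -> 1 - tau < N * m -> 0 < Y (S g Lg) g ->
  w * alpha / (N * K)
  * (2 * X (S g Lg) g * ((1 - tau) * dSg + N * m) * Y (S g Lg) g
     - X (S g Lg) g ^ 2 * (dSg - alpha)) / Y (S g Lg) g ^ 2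
  > w * alpha / (N * K)
    * (2 * X (S g Lg) g * ((1 - tau) * dSL) * Y (S g Lg) g
       - X (S g Lg) g ^ 2 * dSL) / Y (S g Lg) g ^ 2.
Proof.
  intros HN HF Ha Hw HNm Hg Ht HLg HuNm HY.
  assert (HD : 0 < D) by nra.
  assert (HK : 0 < K) by nra.
  assert (Hbase : 0 < S g Lg - dSg * g).
  { rewrite (employment_affine g Lg ltac:(lra)).
    assert (HdSL : 0 < N * m * (1 - tau) / D) by (apply Rdiv_lt_0_compat; nra).
    assert (HS0 : 0 < S0).
    { apply Rdiv_lt_0_compat; [apply Rmult_lt_0_compat; [apply Rmult_lt_0_compat|]|]; nra. }
    nra. }
  set (s := S g Lg) in *.
  (* If N m < 2 (1 - tau), then 0 < 2 (1 - tau) - N m < 1 - tau < 1. *)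
  assert (Hwedge : 0 < (N * m - alpha) * (N * m - 2 * (1 - tau)) + N * m) by nra.
  set (gap := 2 * Y s g * ((1 - tau) * (dSg - dSL) + N * m)
              - X s g * (dSg - dSL - alpha)).
  assert (Hgap : 0 < gap).
  { unfold gap; rewrite (derivative_gap_identity s g ltac:(lra)).
    apply Rmult_lt_0_compat; [exact HK|].
    apply Rplus_lt_le_0_compat.
    - apply Rdiv_lt_0_compat; [apply Rmult_lt_0_compat|]; lra.
    - apply Rmult_le_pos; [| apply Rlt_le, Rinv_0_lt_compat, pow_lt; lra].
      apply Rmult_le_pos; [apply Rmult_le_pos|]; lra. }
  assert (Hc : 0 < w * alpha / (N * K)) by (apply Rdiv_lt_0_compat; nra).
  assert (HX : 0 < X s g) by nra.
  apply Rlt_0_minus.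
  match goal with |- 0 < ?d =>
    replace d with (w * alpha / (N * K) * X s g * gap / Y s g ^ 2)
      by (unfold gap; field; lra) end.
  apply Rdiv_lt_0_compat; [| apply pow_lt; exact HY].
  apply Rmult_lt_0_compat; [apply Rmult_lt_0_compat|]; assumption.
Qed.

End Equilibrium.

Theorem theorem6 (N m F alpha w g tau Lg : R) :
  0 < N -> 0 < m -> 0 < F -> 0 < alpha -> 0 < w -> N * m > alpha ->
  0 <= g -> 0 < tau < 1 -> 0 <= Lg ->
  0 < Lpriv N m F alpha g tau Lg + Lg - alpha * g ->
  alpha > 1 - tau ->
  Derive (fun x => profit N m F alpha w x tau Lg) g >
  Derive (fun x => profit N m F alpha w g tau x) Lg.
Proof.
  intros HN _ HF Ha Hw HNm Hg Ht HLg HY Hat.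
  assert (HD : alpha + (N * m - alpha) * tau <> 0) by nra.
  assert (HK : N * m + alpha * (1 - tau) <> 0) by nra.
  assert (HS : 0 < Lpriv N m F alpha g tau Lg + Lg) by nra.
  rewrite (is_derive_unique (fun x : R => profit N m F alpha w x tau Lg) g _
             (is_derive_profit_g N m F alpha w tau g Lg ltac:(lra) HK HD HS HY)),
          (is_derive_unique (fun x : R => profit N m F alpha w g tau x) Lg _
             (is_derive_profit_Lg N m F alpha w tau g Lg ltac:(lra) HK HD HS HY)).
  apply profit_derivative_g_gt_Lg; lra.
Qed.
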